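(* Let $K$ be a finite ordered simplicial complex in $\mathbb{R}^N$ and let $\{U_i\}$ be a locally finite cover of $\mathbb{R}^N$ by convex open sets. Then for all sufficiently large $\ell$, the subcomplexes $K_\ell\cap U_i$ are nice and cover $K_\ell$ (every simplex of $K_\ell$ lies in some $K_\ell\cap U_i$).
   Context: A simplicial complex is a locally finite set of linear simplices in $\mathbb{R}^N$ closed under faces with pairwise intersections common faces; ordered means vertices totally ordered. $K_\ell$ is the $\ell$th crystalline subdivision: for an ordered $m$-simplex $\langle v_0,\dots,v_m\rangle$, $m>0$, let $\iota$ be affine into $[0,1]^m$ with $\iota(v_j)=(0,\dots,0,1,\dots,1)$ ($j$ zeros), subdivide $[0,1]^m$ into $2^{\ell m}$ cubes of side $2^{-\ell}$, each into the $m!$ rescaled translates of $\{0\le x_{\pi(1)}\le\dots\le x_{\pi(m)}\le1\}$, and pull back via $\iota$. $K\cap U$ is the maximal subcomplex of $K$ contained in $U$. For a subcomplex $K'$ and $\Delta\in K$, $\Delta\cap K'$ denotes the simplices of $K'$ that are faces of $\Delta$; $\operatorname{star}(K')$ is the set of simplices sharing a face with some simplex of $K'$, with their faces; $K'$ is nice if for every $\Delta\in\operatorname{star}(K')$, $\Delta\cap K'$ is a single face of $\Delta$ (with its faces). *)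

From HB Require Import structures.
From mathcomp Require Import all_boot all_order all_algebra.
From mathcomp Require Import all_classical all_reals all_analysis.

Set Implicit Arguments.
Unset Strict Implicit.
Unset Printing Implicit Defensive.

Import Order.TTheory GRing.Theory Num.Theory.
Import numFieldNormedType.Exports.
Local Open Scope classical_set_scope.
Local Open Scope ring_scope.

Section Defs.
Variables (R : realType) (N : nat).
Local Notation pt := 'rV[R]_N.

(** A (linear) simplex is given by its list of vertices (ordered simplex:
    the list order is the vertex order). *)

Definition chull (D : seq pt) : set pt :=
  [set x | exists lam : nat -> R,
      (forall j, 0 <= lam j) /\ \sum_(j < size D) lam j = 1 /\
      x = \sum_(j < size D) lam j *: nth 0 D j].

Definition aff_indep (D : seq pt) : Prop :=
  forall lam : nat -> R,
    \sum_(j < size D) lam j = 0 ->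
    \sum_(j < size D) lam j *: nth 0 D j = 0 ->
    forall j, (j < size D)%N -> lam j = 0.

Definition is_face (F D : seq pt) : Prop := F != [::] /\ {subset F <= D}.

Definition ordered_complex (lt : rel pt) (K : seq (seq pt)) : Prop :=
  (forall x, ~~ lt x x) /\
  (forall x y z, lt x y -> lt y z -> lt x z) /\
  (forall D D' x y, D \in K -> D' \in K -> x \in D -> y \in D' ->
      x != y -> lt x y || lt y x) /\
  (forall D, D \in K -> [/\ D != [::], aff_indep D & sorted lt D]) /\
  (forall D F, D \in K -> subseq F D -> F != [::] -> F \in K) /\
  (forall D D', D \in K -> D' \in K ->
      exists F, (F == [::] \/ F \in K) /\ {subset F <= D} /\ {subset F <= D'} /\
        chull D `&` chull D' = chull F).

(** For an ordered m-simplex D = <v_0,...,v_m>,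
    iota maps v_j to (0,..,0,1,..,1) (j zeros) in [0,1]^m; its inverse is
    the affine map [cpullback D] below: y |-> sum_j cbary m y j *: v_j, where
    (with 0-based coordinates y_0..y_(m-1), y_(-1) := 0, y_m := 1)
    cbary m y j = y_j - y_(j-1). *)
Definition Yext (m : nat) (y : nat -> R) (j : nat) : R :=
  if (j < m)%N then y j else 1.

Definition cbary (m : nat) (y : nat -> R) (j : nat) : R :=
  Yext m y j - (if j is j'.+1 then Yext m y j' else 0).

Definition cpullback (D : seq pt) (y : nat -> R) : pt :=
  \sum_(j < size D) cbary (size D).-1 y j *: nth 0 D j.

(** y lies in iota(D) = {0 <= y_0 <= ... <= y_(m-1) <= 1} *)
Definition in_std (m : nat) (y : nat -> R) : Prop :=
  forall j, (j <= m)%N -> 0 <= cbary m y j.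

(** k-th vertex (k = 0..m) of the simplex
    c 2^-l + 2^-l {0 <= x_(p_0) <= ... <= x_(p_(m-1)) <= 1}
    of the cube with corner c 2^-l, where p is a permutation of 0..m-1:
    the coordinates x_(p_i), i >= k, equal 1, the others 0. *)
Definition fvert (l : nat) (c : nat -> nat) (p : seq nat) (k : nat) : nat -> R :=
  fun i => (c i + (i \in drop k p))%:R / (2 ^ l)%:R.

(** [S] is a simplex of the l-th crystalline subdivision K_l of [K]:
    the pull-back by iota_D, for some D in K, of a face of one of the
    2^(l m) m! small simplices of [0,1]^m that is contained in iota(D);
    a simplex is identified with its vertex set, so any listing of the
    vertices is accepted. *)
Definition crystalline (K : seq (seq pt)) (l : nat) (S : seq pt) : Prop :=
  exists D, D \in K /\
    exists (c : nat -> nat) (p : seq nat) (ks : seq nat),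
      let m := (size D).-1 in
      [/\ (forall i, (i < m)%N -> (c i < 2 ^ l)%N),
          perm_eq p (iota 0 m),
          subseq ks (iota 0 m.+1) /\ ks != [::],
          (forall k, k \in ks -> in_std m (fvert l c p k)) &
          perm_eq S [seq cpullback D (fvert l c p k) | k <- ks]].

(** A complex is represented by the predicate of its simplices. *)

Definition cx_restrict (L : seq pt -> Prop) (U : set pt) : seq pt -> Prop :=
  fun S => L S /\ chull S `<=` U.

Definition cx_star (L L' : seq pt -> Prop) : seq pt -> Prop :=
  fun D => L D /\ exists D1, L D1 /\ is_face D D1 /\
    exists D2, L' D2 /\ exists F, is_face F D1 /\ is_face F D2.

(** K' is cx_nice in L: for every D in cx_star(K'), the simplices of K' that are
    faces of D are exactly the faces of a single is_face F of D (F = [::]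
    standing for the empty is_face, i.e. no such simplex). *)
Definition cx_nice (L L' : seq pt -> Prop) : Prop :=
  forall D, cx_star L L' D ->
    exists F : seq pt, {subset F <= D} /\
      forall S, uniq S -> ((L' S /\ is_face S D) <-> is_face S F).

Definition is_convex (U : set pt) : Prop :=
  forall x y (t : R), U x -> U y -> 0 <= t <= 1 -> U (t *: x + (1 - t) *: y).

Definition locally_finite_cover (I : Type) (U : I -> set pt) : Prop :=
  (forall x : pt, exists i, U i x) /\
  (forall x : pt, exists V : set pt, nbhs x V /\
      finite_set [set i | U i `&` V !=set0]).

End Defs.

From HB Require Import structures.
From mathcomp Require Import all_boot all_order all_algebra.
From mathcomp Require Import all_classical all_reals all_analysis.
From mathcomp Require Import ring lra.
Import Order.TTheory GRing.Theory Num.Theory.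
Import numFieldNormedType.Exports.
Local Open Scope classical_set_scope.
Local Open Scope ring_scope.
Set Implicit Arguments.
Unset Strict Implicit.
Unset Printing Implicit Defensive.

(* For a convex U, the simplices of K_l inside U that are faces of a simplex
   D of K_l are exactly the faces spanned by the vertices of D lying in U, so
   K_l /\ U is nice for every l.  For the covering, each simplex D of K is
   the image of the unit cube under the Lipschitz map [cpullback D]; the
   pulled-back cover of the compact cube has a Lebesgue number, and once
   2^-l is below it for every D of the finite list K, the vertices of a
   simplex of K_l, whose cube coordinates differ by at most 2^-l, lie in a
   common U_i, which then contains the whole simplex by convexity. *)

Lemma subseq_perm_map (T1 T2 : eqType) (f : T1 -> T2) (s : seq T1)
    (S : seq T2) :
  uniq S -> {subset S <= map f s} ->
  exists2 s', subseq s' s & perm_eq S (map f s').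
Proof.
elim: s S => [|k s IH] S uS sub_S.
  by exists [::]; case: S sub_S {uS} => // x S /(_ x (mem_head _ _)).
have [fkS | fkS] := boolP (f k \in S).
  have [|s' ss' perm'] := IH (rem (f k) S) (rem_uniq _ uS).
    move=> x; rewrite mem_rem_uniq // => /andP [/negbTE xk /sub_S].
    by rewrite /= in_cons xk.
  exists (k :: s'); first by rewrite /= eqxx.
  by rewrite (perm_trans (perm_to_rem fkS)) // perm_cons.
have [|s' ss' perm'] := IH S uS.
  move=> x xS; have /predU1P [xk|//] := sub_S x xS.
  by rewrite -xk xS in fkS.
by exists s'; first exact: subseq_trans ss' (subseq_cons s k).
Qed.

Lemma filter_forall_seq (X : Type) (F : set_system X) (T : eqType) (s : seq T)
    (P : T -> X -> Prop) {FF : Filter F} :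
  (forall x, \forall n \near F, P x n) ->
  \forall n \near F, forall x, x \in s -> P x n.
Proof.
move=> P_near; elim: s => [|a s IH]; first exact: nearW.
apply: filterS2 (P_near a) IH => n Pa Ps x.
by rewrite in_cons => /predU1P [-> // | /Ps].
Qed.

Lemma lebesgue_number (R : realFieldType) (T : pseudoMetricType R) (I : Type)
    (C : set T) (V : I -> set T) :
  compact C -> (forall i, open (V i)) -> C `<=` \bigcup_i V i ->
  exists2 e : R, 0 < e & forall x, C x -> exists i, ball x e `<=` V i.
Proof.
move=> /compact_near_coveringP C_cover V_open CV.
have : \forall e \near (0 : R)^'+, C `<=` fun x => exists i, ball x e `<=` V i.
  apply: C_cover => x /CV [i _ Vix].
  have /nbhs_ballP [r /= r0 rV] : nbhs x (V i) by apply: open_nbhs_nbhs.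
  exists (ball x (r / 2), [set e | e < r / 2]).
    split=> /=; [apply: nbhsx_ballx | apply: nbhs_right_lt];
    by rewrite divr_gt0.
  case=> y e /= [xy e_lt]; exists i => z yz; apply: rV.
  rewrite (splitr r); apply: (ball_triangle xy).
  by apply: le_ball yz; exact: ltW.
move=> e_cover; near (0 : R)^'+ => e.
exists e; first by near: e; exact: nbhs_right_gt.
by near: e.
Unshelve. all: by end_near.
Qed.

Lemma lipschitz_continuous (R : realFieldType) (V W : normedModType R) (k : R)
    (f : V -> W) :
  (forall x y, `|f x - f y| <= k * `|x - y|) -> continuous f.
Proof.
move=> f_lip x; apply/cvgrPdist_lt => e e0.
have k1_gt0 : 0 < `|k| + 1 by rewrite ltr_wpDl.
near=> y; apply: le_lt_trans (f_lip x y) _.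
apply: (@le_lt_trans _ _ ((`|k| + 1) * `|x - y|)).
  by rewrite ler_wpM2r // (le_trans (ler_norm k)) // lerDl.
rewrite -ltr_pdivlMl // mulrC; near: y.
by apply: cvgr_dist_lt; [exact: cvg_id | rewrite divr_gt0].
Unshelve. all: by end_near.
Qed.

Lemma ler_mx_entry_norm (R : realDomainType) m n (A : 'M[R]_(m, n)) i j :
  `|A i j| <= `|A|.
Proof. by rewrite [leRHS]/Num.norm /= mx_normrE (le_bigmax _ _ (i, j)). Qed.

Section ConvexHull.
Variables (R : realType) (N : nat).
Local Notation pt := 'rV[R]_N.

Lemma chull_mem (S : seq pt) x : x \in S -> chull S x.
Proof.
move=> xS; have xi : (index x S < size S)%N by rewrite index_mem.
pose delta j : R := (j == index x S)%:R.
have delta_out (j : 'I_(size S)) : j != Ordinal xi -> delta j = 0.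
  by rewrite /delta -(inj_eq val_inj) => /negbTE ->.
exists delta; split=> [j|]; first exact: ler0n.
have delta_in : delta (index x S) = 1 by rewrite /delta eqxx.
split; rewrite (bigD1 (Ordinal xi)) //= delta_in ?scale1r ?nth_index //.
  by rewrite big1 ?addr0 // => j /delta_out.
by rewrite big1 ?addr0 // => j /delta_out ->; rewrite scale0r.
Qed.

Lemma chull_cons_inv a (S : seq pt) x : chull (a :: S) x ->
  x = a \/ exists2 t : R, 0 <= t <= 1 &
                 exists2 y, chull S y & x = t *: a + (1 - t) *: y.
Proof.
move=> [lam [lam_ge0 []]]; rewrite /= !big_ord_recl /= => sum1 ->.
set s := \sum_(i < size S) lam (bump 0 i).
have s_ge0 : 0 <= s by apply: sumr_ge0 => i _.
have s_eq : s = 1 - lam 0%N by rewrite -sum1 addrC addKr.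
have [s0 | s_neq0] := eqVneq s 0.
  left; have lamS0 (i : 'I_(size S)) : lam (bump 0 i) = 0.
    by apply: (psumr_eq0P (fun i _ => lam_ge0 _) s0).
  rewrite big1 => [|i _]; last by rewrite lamS0 scale0r.
  rewrite addr0; suff -> : lam 0%N = 1 by rewrite scale1r.
  by move: s_eq; rewrite s0; lra.
right; exists (lam 0%N); first by rewrite lam_ge0 -subr_ge0 -s_eq.
exists (\sum_(i < size S) (lam (bump 0 i) / s) *: nth 0 S i).
  exists (fun j => lam j.+1 / s); split=> [j|]; first by rewrite divr_ge0.
  by split=> //; rewrite -mulr_suml divff.
rewrite -s_eq scaler_sumr; congr (_ + _); apply: eq_bigr => i _.
by rewrite scalerA mulrC divfK.
Qed.

Lemma chull_sub_convex (U : set pt) (S : seq pt) :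
  is_convex U -> (forall x, x \in S -> U x) -> chull S `<=` U.
Proof.
move=> convU; elim: S => [|a S IH] SU x.
  by move=> [lam [_ []]]; rewrite big_ord0 => /eqP; rewrite eq_sym oner_eq0.
have Ua : U a by apply: SU; rewrite mem_head.
case/chull_cons_inv => [-> // | [t t01 [y /IH Uy ->]]].
apply: convU => //; apply: Uy => z zS.
by apply: SU; rewrite in_cons zS orbT.
Qed.
End ConvexHull.

Section Crystalline.
Variables (R : realType) (N : nat).
Local Notation pt := 'rV[R]_N.

Lemma crystalline_face (K : seq (seq pt)) l (D S : seq pt) :
  crystalline K l D -> uniq S -> is_face S D -> crystalline K l S.
Proof.
move=> [D0 [D0K [c [p [ks [c_lt p_perm [ks_sub ks_nil] ks_std D_perm]]]]]].
move=> uS [S_nil SD].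
have /(subseq_perm_map uS) [ks' ks'_sub S_perm] :
    {subset S <= [seq cpullback D0 (fvert R l c p k) | k <- ks]}.
  by move=> x /SD; rewrite (perm_mem D_perm).
exists D0; split=> //; exists c, p, ks'; split=> //.
- split; first exact: subseq_trans ks'_sub ks_sub.
  by apply: contraNneq S_nil => ks'0; rewrite -size_eq0 (perm_size S_perm) ks'0.
- by move=> k kks'; apply/ks_std/(mem_subseq ks'_sub).
Qed.

Lemma cx_nice_convex (K : seq (seq pt)) l (U : set pt) : is_convex U ->
  cx_nice (crystalline K l) (cx_restrict (crystalline K l) U).
Proof.
move=> convU D [KD _]; exists [seq x <- D | `[< U x >]].
split=> [x|S uS]; first by rewrite mem_filter => /andP [].
split=> [[[_ SU] [S_nil SD]] | [S_nil SF]].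
  split=> // x xS; rewrite mem_filter SD // andbT.
  by apply/asboolP/SU/chull_mem.
have SD : {subset S <= D} by move=> x /SF; rewrite mem_filter => /andP [].
split=> //; split; first exact: crystalline_face KD uS _.
by apply: chull_sub_convex => // x /SF; rewrite mem_filter => /andP [/asboolP].
Qed.

Lemma fvert_ge0_le1 l c p k j : (c j < 2 ^ l)%N -> 0 <= fvert R l c p k j <= 1.
Proof.
move=> cj; rewrite /fvert divr_ge0 //= ler_pdivrMr ?ltr0n ?expn_gt0 //.
rewrite mul1r ler_nat.
by case: (j \in drop k p); rewrite ?addn1 ?addn0 // ltnW.
Qed.

Lemma fvert_dist l c p k k' j :
  `|fvert R l c p k j - fvert R l c p k' j| <= ((2 ^ l)%:R)^-1.
Proof.
rewrite /fvert -mulrBl normrM [`|_^-1|]ger0_norm ?invr_ge0 //.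
apply: ler_piMl; first by rewrite invr_ge0.
rewrite !natrD opprD addrACA subrr add0r.
by case: (j \in drop k p); case: (j \in drop k' p);
  rewrite ?subrr ?normr0 ?subr0 ?sub0r ?normrN ?normr1.
Qed.
End Crystalline.

Section Pullback.
Variables (R : realType) (N : nat).
Local Notation pt := 'rV[R]_N.

Definition fun_of_rV m (v : 'rV[R]_m) (j : nat) : R :=
  if insub j is Some i then v ord0 i else 0.

Lemma fun_of_rV_row m (g : nat -> R) j : (j < m)%N ->
  fun_of_rV (\row_(i < m) g i) j = g j.
Proof. by move=> jm; rewrite /fun_of_rV insubT mxE. Qed.

Lemma fun_of_rV_dist m (v v' : 'rV[R]_m) j :
  `|fun_of_rV v j - fun_of_rV v' j| <= `|v - v'|.
Proof.
rewrite /fun_of_rV; case: insubP => [i _ _ | _]; last by rewrite subrr normr0.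
by apply: le_trans (ler_mx_entry_norm (v - v') ord0 i); rewrite !mxE.
Qed.

Lemma cpullback_lipschitz (D : seq pt) (g g' : nat -> R) (d : R) : 0 <= d ->
  (forall j, (j < (size D).-1)%N -> `|g j - g' j| <= d) ->
  `|cpullback D g - cpullback D g'| <= d *+ 2 * \sum_(j < size D) `|nth 0 D j|.
Proof.
move=> d_ge0 g_near; set m := (size D).-1.
have Yext_near j : `|Yext m g j - Yext m g' j| <= d.
  by rewrite /Yext; case: ifP => [/g_near // | _]; rewrite subrr normr0.
have cbary_near j : `|cbary m g j - cbary m g' j| <= d *+ 2.
  have subBB (a b a' b' : R) : a - b - (a' - b') = (a - a') - (b - b') by ring.
  rewrite /cbary subBB mulr2n.
  apply: le_trans (ler_normB _ _) _; apply: lerD => //.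
  by case: j => [|j]; rewrite ?subrr ?normr0.
rewrite /cpullback -sumrB mulr_sumr; apply: le_trans (ler_norm_sum _ _ _) _.
by apply: ler_sum => j _; rewrite -scalerBl normrZ ler_wpM2r.
Qed.

Lemma cpullback_eq (D : seq pt) (g g' : nat -> R) :
  (forall j, (j < (size D).-1)%N -> g j = g' j) ->
  cpullback D g = cpullback D g'.
Proof.
move=> gg'; apply/eqP; rewrite -subr_eq0 -normr_le0.
apply: le_trans (cpullback_lipschitz (lexx 0) _) _.
  by move=> j /gg' ->; rewrite subrr normr0.
by rewrite mul0rn mul0r.
Qed.

Lemma cpullback_rV_continuous (D : seq pt) :
  continuous (fun v : 'rV[R]_(size D).-1 => cpullback D (fun_of_rV v)).
Proof.
apply: (@lipschitz_continuous _ _ _ ((\sum_(j < size D) `|nth 0 D j|) *+ 2)).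
move=> v v'; rewrite mulrnAl -mulrnAr mulrC.
by apply: cpullback_lipschitz => // j _; exact: fun_of_rV_dist.
Qed.

Variables (I : Type) (U : I -> set pt).
Hypotheses (U_open : forall i, open (U i)) (U_cover : forall x, exists i, U i x)
  (U_convex : forall i, is_convex (U i)).

Definition lebesgue_radius (D : seq pt) (e : R) : Prop :=
  forall g0 : nat -> R, (forall j, (j < (size D).-1)%N -> 0 <= g0 j <= 1) ->
  exists i, forall g, (forall j, (j < (size D).-1)%N -> `|g j - g0 j| <= e) ->
    U i (cpullback D g).

Lemma exists_lebesgue_radius (D : seq pt) :
  exists2 e : R, 0 < e & lebesgue_radius D e.
Proof.
set m := (size D).-1; pose F (v : 'rV[R]_m) := cpullback D (fun_of_rV v).
pose cube := [set v : 'rV[R]_m | forall i, `[0, 1]%classic (v ord0 i)].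
have cube_compact : compact cube.
  have := @rV_compact R m (fun=> `[0, 1]%classic).
  by apply=> _; exact: segment_compact.
have [||e e0 cube_leb] :=
  lebesgue_number cube_compact (V := fun i => F @^-1` U i).
- move=> i; apply: open_comp; last exact: U_open.
  by move=> v _; exact: cpullback_rV_continuous.
- by move=> v _; have [i Ui] := U_cover (F v); exists i.
exists (e / 2) => [|g0 g0_cube]; first by rewrite divr_gt0.
have [|i ballU] := cube_leb (\row_(j < m) g0 j).
  by move=> j; rewrite mxE /= in_itv /=; exact: g0_cube.
exists i => g g_near.
have -> : cpullback D g = F (\row_(j < m) g j).
  by apply: cpullback_eq => j jm; rewrite fun_of_rV_row.
apply: ballU; split=> // i0 j; rewrite !mxE.
rewrite /ball /= distrC; apply: le_lt_trans (g_near j _) _ => //.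
by rewrite ltr_pdivrMr // ltr_pMr // ltr1n.
Qed.

Lemma lebesgue_radius_dyadic (D : seq pt) :
  \forall l \near \oo, lebesgue_radius D ((2 ^ l)%:R)^-1.
Proof.
have [e e0 De] := exists_lebesgue_radius D.
near=> l => g0 /De [i Ui]; exists i => g g_near; apply: Ui => j jm.
apply: le_trans (g_near j jm) _; rewrite natrX -div1r; apply: ltW; near: l.
exact: (near_infty_natSinv_expn_lt (PosNum e0)).
Unshelve. all: by end_near.
Qed.

Lemma crystalline_cover (K : seq (seq pt)) l :
  (forall D, D \in K -> lebesgue_radius D ((2 ^ l)%:R)^-1) ->
  forall S, crystalline K l S ->
  exists i, cx_restrict (crystalline K l) (U i) S.
Proof.
move=> K_leb S KS; have [D [DK [c [p [ks]]]]] := KS.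
case=> c_lt _ [_ ks_nil] _ S_perm; case: ks ks_nil S_perm => // k0 ks _ S_perm.
have [|i Ui] := K_leb D DK (fvert R l c p k0).
  by move=> j /c_lt; exact: fvert_ge0_le1.
exists i; split=> //; apply: chull_sub_convex => // x.
rewrite (perm_mem S_perm) => /mapP [k _ ->].
by apply: Ui => j _; exact: fvert_dist.
Qed.
End Pullback.

Theorem lemma3p12 (R : realType) (N : nat) (lt : rel 'rV[R]_N)
  (K : seq (seq 'rV[R]_N)) (I : Type) (U : I -> set 'rV[R]_N) :
  ordered_complex lt K ->
  (forall i, open (U i) /\ is_convex (U i)) ->
  locally_finite_cover U ->
  exists L : nat, forall l : nat, (L <= l)%N ->
    (forall i, cx_nice (crystalline K l) (cx_restrict (crystalline K l) (U i))) /\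
    (forall S, crystalline K l S -> exists i, cx_restrict (crystalline K l) (U i) S).
Proof.
move=> _ U_open_convex [U_cover _].
have U_open i : open (U i) := (U_open_convex i).1.
have U_convex i : is_convex (U i) := (U_open_convex i).2.
have [L _ K_leb] := filter_forall_seq K (lebesgue_radius_dyadic U_open U_cover).
exists L => l Ll; split=> [i | ]; first exact: cx_nice_convex.
by apply: crystalline_cover => // D; exact: K_leb.
Qed.
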